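(* Let $G$ be a finite group and $H$ a subgroup of $G$. Then $|\mathrm{Solv}(H)| \leq |\mathrm{Solv}(G)|$.
   Context: For a finite group $G$ and $x \in G$, the solvabilizer of $x$ in $G$ is $\mathrm{Sol}_G(x) = \{y \in G : \langle x, y \rangle \text{ is solvable}\}$. $\mathrm{Solv}(G) = \{\mathrm{Sol}_G(x) : x \in G\}$ is the set of distinct solvabilizers of elements of $G$. *)

From mathcomp Require Import all_boot all_fingroup all_solvable.
Set Implicit Arguments. Unset Strict Implicit. Unset Printing Implicit Defensive.
Local Open Scope group_scope.

Definition solvabilizer (gT : finGroupType) (G : {set gT}) (x : gT) : {set gT} :=
  [set y in G | solvable <<[set x; y]>>].

Definition Solv (gT : finGroupType) (G : {set gT}) : {set {set gT}} :=
  [set solvabilizer G x | x in G].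

From mathcomp Require Import all_boot all_fingroup all_solvable.

(* Since Sol_H(x) = Sol_G(x) ∩ H, the map S |-> S ∩ H sends Solv(G) onto a
   superset of Solv(H), and a map cannot increase the cardinality of a set. *)

Set Implicit Arguments.
Unset Strict Implicit.
Unset Printing Implicit Defensive.

Section Solvabilizer.

Variable gT : finGroupType.
Implicit Types A B : {set gT}.

Lemma solvabilizer_setIr A B x :
  A \subset B -> solvabilizer A x = solvabilizer B x :&: A.
Proof.
move=> sAB; apply/setP => y; rewrite !inE andbC.
by case Ay: (y \in A); rewrite ?andbF // (subsetP sAB y Ay).
Qed.

Lemma Solv_sub_imset_setIr A B :
  A \subset B -> Solv A \subset [set S :&: A | S in Solv B].
Proof.
move=> sAB; apply/subsetP => _ /imsetP[x Ax ->].
rewrite (solvabilizer_setIr x sAB).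
by apply: imset_f; apply: imset_f; apply: (subsetP sAB).
Qed.

Lemma leq_card_Solv A B : A \subset B -> #|Solv A| <= #|Solv B|.
Proof.
move=> sAB; apply: leq_trans (leq_imset_card (fun S => S :&: A) (Solv B)).
exact/subset_leq_card/Solv_sub_imset_setIr.
Qed.

End Solvabilizer.

Theorem lemma2p4 (gT : finGroupType) (G H : {group gT}) :
  H \subset G -> #|Solv H| <= #|Solv G|.
Proof. exact: leq_card_Solv. Qed.
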